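(* Let $k$, $d$ and $n$ be positive integers such that $k \ge 6$ is even, $d \ge 2$, and $n \ge\frac{d+1}{8}(k^2-2sk+4s-4) + 1$, where $s \in \{0,1\}$ with $s \equiv \frac{k-2}{2} \pmod 2$. Then, for any function $f:[n] \rightarrow \{-1,1\}$ such that $|f([n])| \le \frac{d-1}{d+1}n$, there exists a $(d,k)$-block $A\subseteq[n]$ with $f(A)=0$.
   Context: $[n]=\{1,\dots,n\}$; $f(Y)=\sum_{y\in Y}f(y)$. A $(d,k)$-block in $[n]$ is a set $\{a_1,\dots,a_k\}\subseteq[n]$ of integers with $a_1<a_2<\dots<a_k$ and $a_{i+1}-a_i\le d$ for all $1\le i\le k-1$. *)

From mathcomp Require Import all_boot all_order all_algebra.
Set Implicit Arguments. Unset Strict Implicit. Unset Printing Implicit Defensive.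
Import Order.TTheory GRing.Theory Num.Theory.
Local Open Scope ring_scope.

Definition fsum (f : nat -> int) (Y : seq nat) : int := \sum_(y <- Y) f y.

(* A (d,k)-block in [n]: a set {a_1 < ... < a_k} subset of [n] with
   a_{i+1} - a_i <= d.  Represented by its increasing enumeration. *)
Definition dk_block (n d k : nat) (A : seq nat) : Prop :=
  [/\ size A = k, sorted ltn A, all (fun a => (1 <= a <= n)%N) A
    & sorted (fun a b => (b <= a + d)%N) A].

From mathcomp Require Import all_boot all_order all_algebra.
From mathcomp Require Import zify.
From Stdlib Require Import Classical.
Import Order.TTheory GRing.Theory Num.Theory.

Set Implicit Arguments.
Unset Strict Implicit.
Unset Printing Implicit Defensive.

(* Suppose no (d,k)-block has f-sum 0.  A block sum is k minus twice the
   number of -1's in the block, hence even, and exchanging one element of a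
   block changes it by at most 2.  Every block is linked to the rightmost
   interval by such exchanges, so all block sums have the same sign, positive
   after replacing f by -f.  Then no block contains k/2 = w + 1 of the -1's:
   bridging the gaps between any w + 1 of them by steps of length at most d
   needs at least w + 2 extra points.  Cutting the sorted positions of the
   M >= n/(d+1) entries -1 into windows of w gaps, their span, which is less
   than n <= (d+1)M, is at least M - 1 plus d (w + 2) per window.  This forces
   2M <= w (w + 2 - s) with s = w mod 2, contradicting the lower bound on n. *)

Definition dstep (d : nat) : rel nat := fun a b => a < b <= a + d.

Lemma dstep_ltn d : subrel (dstep d) ltn.
Proof. by move=> a b /andP[]. Qed.

Lemma dk_blockE n d k A :
  dk_block n d k A <->
  [/\ size A = k, all (fun a => 0 < a <= n) A & sorted (dstep d) A].
Proof.
have -> : sorted (dstep d) A = sorted ltn A && sorted (fun a b => b <= a + d) A.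
  by rewrite -sorted_relI.
by rewrite /dk_block; split=> [[-> -> -> ->]|[-> -> /andP[-> ->]]].
Qed.

Lemma dk_block_iota n d k a :
  0 < d -> 0 < a -> a + k <= n.+1 -> dk_block n d k (iota a k).
Proof.
move=> d_gt0 a_gt0 akn; apply/dk_blockE; split; first exact: size_iota.
  by apply/allP=> x; rewrite mem_iota; lia.
elim: k a {a_gt0 akn} => [|[|k] IH] a //.
have := IH a.+1; rewrite /= => ->; rewrite andbT /dstep; lia.
Qed.

Lemma path_ltn_bounds x s :
  path ltn x s -> all (fun a => x <= a <= last x s) (x :: s).
Proof.
elim: s x => [|y s IH] x; first by rewrite /= leqnn.
case/andP=> xy /IH /allP ys; have yl := ys y (mem_head _ _).
by apply/allP=> a; rewrite [last _ _]/= inE => /predU1P[->|/ys]; lia.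
Qed.

Lemma path_ltn_gap h t :
  path ltn h t ->
  t = iota h.+1 (size t) \/
  exists s1 b s2, t = s1 ++ b :: s2 /\ (last h s1).+1 < b.
Proof.
elim: t h => [|y t IH] h /=; first by left.
case/andP=> hy /IH; have [->|ne] := eqVneq y h.+1.
  case=> [->|[s1 [b [s2 [-> gap]]]]]; first by left; rewrite size_iota.
  by right; exists (h.+1 :: s1), b, s2.
by right; exists [::], y, t; split => //=; lia.
Qed.

Lemma path_dstep_insert d h s1 b s2 :
  0 < d -> (last h s1).+1 < b ->
  path (dstep d) h (s1 ++ b :: s2) -> path (dstep d) h (s1 ++ b.-1 :: b :: s2).
Proof.
by move=> d_gt0 gap; rewrite !cat_path /= /dstep => /and3P[-> /andP[_ ?] ->]; lia.
Qed.

(* An interval slides one step to the right; any other block trades its head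
   for the point just below its first hole. *)
Lemma dk_block_step n d k h t :
  0 < d -> dk_block n d k (h :: t) -> h :: t != iota (n.+1 - k) k ->
  exists c B, [/\ dk_block n d k B, path ltn h B & perm_eq (c :: t) B].
Proof.
move=> d_gt0 /dk_blockE[sz /allP hr Bd].
case: (path_ltn_gap (sub_path (@dstep_ltn d) Bd)) => [Et|[s1 [b [s2 [Et gap]]]]] ne.
  have Ehk : h :: t = iota h k by rewrite -sz {1}Et.
  have /andP[h_gt0 _] : 0 < h <= n by apply: hr; apply: mem_head.
  have k_gt0 : 0 < k by rewrite -sz.
  have /andP[_ hkn] : 0 < h + k.-1 <= n by apply: hr; rewrite Ehk mem_iota; lia.
  move: ne; rewrite Ehk => /eqP ne; exists (h + k), (iota h.+1 k); split.
  - by apply: dk_block_iota => //; apply/negP => ?; apply: ne; congr iota; lia.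
  - exact: (iota_ltn_sorted h k.+1).
  - rewrite {1}Et -sz [size _]/=; move: (size t) => m.
    by rewrite -(addn1 m) iotaD perm_sym perm_catC /= addn1 addSnnS.
have Bd' : path (dstep d) h (s1 ++ b.-1 :: b :: s2).
  by apply: path_dstep_insert; rewrite // -Et.
have Bperm : perm_eq (b.-1 :: t) (s1 ++ b.-1 :: b :: s2).
  by rewrite Et -cat1s perm_catCA.
exists b.-1, (s1 ++ b.-1 :: b :: s2); split=> //; last exact: sub_path (@dstep_ltn d) _ _ Bd'.
apply/dk_blockE; split; last exact: path_sorted Bd'.
  by rewrite -(perm_size Bperm) -sz.
apply/allP=> a; rewrite -(perm_mem Bperm) inE => /predU1P[->|a_t].
  have : 0 < b <= n by apply: hr; rewrite Et !(inE, mem_cat) eqxx !orbT.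
  lia.
by apply: hr; rewrite inE a_t orbT.
Qed.

(* The least number of points to insert between a < b so that all gaps are
   at most d. *)
Definition gap_cost d a b := (b - a).-1 %/ d.

Definition fill_cost d x s := sumn (pairmap (gap_cost d) x s).

Lemma fill_cost_cons d x y s : fill_cost d x (y :: s) = gap_cost d x y + fill_cost d y s.
Proof. by []. Qed.

Lemma fill_cost_cat d x s1 s2 :
  fill_cost d x (s1 ++ s2) = fill_cost d x s1 + fill_cost d (last x s1) s2.
Proof. by rewrite /fill_cost pairmap_cat sumn_cat. Qed.

Lemma dstep_bridge d a b :
  0 < d -> a < b ->
  exists s, [/\ path (dstep d) a s, last a s = b & size s = (gap_cost d a b).+1].
Proof.
move=> d_gt0; have [m] := ubnP (b - a); elim: m a => // m IH a ltm ab.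
have [near|far] := leqP b (a + d).
  exists [:: b]; split => //=; first by rewrite /dstep; lia.
  by rewrite /gap_cost divn_small //; lia.
have [s [ps ls sz]] := IH (a + d) ltac:(lia) ltac:(lia).
exists (a + d :: s); split => //=; first by rewrite ps /dstep leqnn andbT; lia.
rewrite sz /gap_cost (_ : (b - a).-1 = (b - (a + d)).-1 + 1 * d) ?divnDMl ?addn1 //.
lia.
Qed.

Lemma dstep_fill d x s :
  0 < d -> path ltn x s ->
  exists s', [/\ path (dstep d) x s', last x s' = last x s, {subset s <= s'}
    & size s' = size s + fill_cost d x s].
Proof.
move=> d_gt0; elim: s x => [|y t IH] x /=; first by exists [::].
case/andP=> xy /IH [t' [pt' lt' st' szt']].
have [[|c b] [pb lb szb]] := dstep_bridge d_gt0 xy; first by [].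
exists (c :: b ++ t'); split.
- by rewrite -cat_cons cat_path pb lb.
- by rewrite -cat_cons last_cat lb.
- move=> a; rewrite inE -cat_cons mem_cat => /predU1P[->|/st' ->]; last by rewrite orbT.
  by rewrite -lb /= mem_last.
- by rewrite -cat_cons size_cat szt' szb fill_cost_cons; lia.
Qed.

Lemma dk_block_extend n d k S :
  0 < d -> k <= n -> sorted (dstep d) S -> all (fun a => 0 < a <= n) S ->
  size S <= k -> exists2 B, dk_block n d k B & {subset S <= B}.
Proof.
move=> d_gt0 kn; have [m] := ubnP (k - size S).
elim: m S => // m IH S ltm Sd Sr Sk.
have [<-|Sk_neq] := eqVneq (size S) k; first by exists S => //; apply/dk_blockE.
have {}IH S' : sorted (dstep d) S' -> all (fun a => 0 < a <= n) S' ->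
    size S' = (size S).+1 -> {subset S <= S'} ->
    exists2 B, dk_block n d k B & {subset S <= B}.
  move=> S'd S'r S'sz sub; have [||B blkB subB] := IH S' _ S'd S'r; try lia.
  by exists B => // a /sub /subB.
case: S Sd Sr Sk {Sk_neq ltm} IH => [|h t] Sd Sr Sk IH.
  by exists (iota 1 k) => //; apply: dk_block_iota.
have /allP hr := Sr; have := hr h (mem_head _ _).
case: (path_ltn_gap (sub_path (@dstep_ltn d) Sd)) => [Et|[s1 [b [s2 [Et gap]]]]] hn.
  have Ehs : h :: t = iota h (size t).+1 by rewrite {1}Et.
  have /andP[_ last_n] : 0 < h + size t <= n by apply: hr; rewrite Ehs mem_iota; lia.
  exists (iota (minn h (n.+1 - k)) k); first by apply: dk_block_iota; lia.
  by move: Sk => /= Sk a; rewrite Ehs !mem_iota; lia.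
have /andP[b_gt0 bn] : 0 < b <= n by apply: hr; rewrite Et inE mem_cat mem_head !orbT.
rewrite {}Et in Sd Sr IH *; apply: (IH (h :: s1 ++ b.-1 :: b :: s2)).
- exact: path_dstep_insert d_gt0 gap Sd.
- by move: Sr; rewrite /= !all_cat /= => /and3P[-> -> /andP[_ ->]]; rewrite andbT; lia.
- by rewrite /= !size_cat /= addnS.
- by move=> a; apply: mem_subseq; rewrite -!cat_cons; apply: cat_subseq (subseq_cons _ _).
Qed.

Lemma fill_cost_span d x s :
  path ltn x s -> d * fill_cost d x s + size s <= last x s - x.
Proof.
elim: s x => [|y s IH] x; first by rewrite /fill_cost /= muln0 subnn.
case/andP=> xy ys; have /andP[/andP[_ y_last] _] := path_ltn_bounds ys.
move: xy (IH _ ys); rewrite fill_cost_cons mulnDr /gap_cost /ltn /=.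
have := leq_divM (y - x).-1 d; nia.
Qed.

Lemma fill_cost_windows (P : pred nat) d w c :
  (forall x s, path ltn x s -> all P (x :: s) -> size s = w -> c <= fill_cost d x s) ->
  forall q x s, path ltn x s -> all P (x :: s) -> q * w <= size s ->
  q * c <= fill_cost d x s.
Proof.
move=> window; elim=> [|q IH] x s xs Ps qs //.
have ws : w <= size s by move: qs; rewrite mulSn; lia.
move: xs Ps qs; rewrite -(cat_take_drop w s) cat_path fill_cost_cat size_cat mulSn.
rewrite -cat_cons all_cat => /andP[xs1 xs2] /andP[Ps1 Ps2] qs.
apply: leq_add; first by apply: window; rewrite // size_take_min; apply/minn_idPl.
apply: IH => //=; last by move: qs; rewrite size_take_min (minn_idPl ws); lia.
by rewrite Ps2 andbT; apply: (allP Ps1); apply: mem_last.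
Qed.

Lemma window_count_bound w S :
  0 < w -> S %/ w * (w + 2) <= S.+1 -> 2 * S.+1 <= w * (w + 2 - w %% 2).
Proof.
move=> w_gt0 le_qS; have S_eq := divn_eq S w; have r_lt := ltn_pmod S w_gt0.
have w_eq := divn_eq w 2; have p_lt := ltn_pmod w (isT : 0 < 2).
have q_le : 2 * (S %/ w) <= w - w %% 2 by nia.
have : 2 * (S %/ w) * w <= (w - w %% 2) * w by rewrite leq_mul2r q_le orbT.
nia.
Qed.


Section SignedBlockSums.

Local Open Scope ring_scope.

Variables (n d k : nat) (f : nat -> int).
Hypothesis d_gt0 : (0 < d)%N.
Hypothesis f_pm : forall x, (0 < x <= n)%N -> f x = 1 \/ f x = -1.

Lemma fsum_pm s :
  all (fun a => 0 < a <= n)%N s ->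
  fsum f s = (size s)%:Z - 2 * (count (fun a => f a == -1) s)%:Z.
Proof.
rewrite /fsum; elim: s => [|x s IH]; first by rewrite big_nil.
case/andP=> /f_pm fx /IH; rewrite big_cons => ->.
by case: fx => fx; rewrite /= fx /=; lia.
Qed.

Lemma dk_block_fsum B :
  dk_block n d k B -> fsum f B = k%:Z - 2 * (count (fun a => f a == -1) B)%:Z.
Proof. by case/dk_blockE=> <- Br _; apply: fsum_pm. Qed.

(* Both sums are even and differ by at most 2, so they cannot straddle 0. *)
Lemma dk_block_swap_sign h t c B :
  ~~ odd k -> dk_block n d k (h :: t) -> dk_block n d k B -> perm_eq (c :: t) B ->
  fsum f (h :: t) != 0 -> fsum f B != 0 ->
  (0 < fsum f (h :: t)) = (0 < fsum f B).
Proof.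
move=> k_even Bht BB cB nz nzB.
have swap : fsum f (h :: t) + f c = fsum f B + f h.
  have sum_cB : fsum f (c :: t) = fsum f B by apply: perm_big.
  by rewrite -sum_cB /fsum !big_cons; lia.
have fh : f h = 1 \/ f h = -1.
  by case/dk_blockE: Bht => _ /allP hr _; apply/f_pm/hr/mem_head.
have fc : f c = 1 \/ f c = -1.
  by case/dk_blockE: BB => _ /allP hr _; apply/f_pm/hr; rewrite -(perm_mem cB) mem_head.
have k2 : k = (2 * k./2)%N by rewrite mul2n -[LHS]odd_double_half (negbTE k_even).
move: swap nz nzB; rewrite (dk_block_fsum Bht) (dk_block_fsum BB) k2.
by move=> swap nz nzB; apply/idP/idP; lia.
Qed.

Lemma dk_block_sign_const :
  ~~ odd k -> (forall B, dk_block n d k B -> fsum f B != 0) ->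
  forall B, dk_block n d k B -> (0 < fsum f B) = (0 < fsum f (iota (n.+1 - k) k)).
Proof.
move=> k_even nz [|h t]; first by case=> <-.
have [m] := ubnP (n - h); elim: m h t => // m IH h t ltm Bht.
have [->//|ne] := eqVneq (h :: t) (iota (n.+1 - k) k).
have [c [[|h' t'] [BB hB cB]]] := dk_block_step d_gt0 Bht ne.
  by case: BB Bht => <- _ _ _ [].
have /andP[_ h'n] : (0 < h' <= n)%N by case/dk_blockE: BB => _ /allP hr _; apply/hr/mem_head.
rewrite (dk_block_swap_sign k_even Bht BB cB (nz _ Bht) (nz _ BB)).
by apply: IH BB; move: hB => /andP[hh' _]; lia.
Qed.

Let negative a := (0 < a <= n)%N && (f a == -1).

Lemma negative_chain_short x s :
  (k <= n)%N -> (forall B, dk_block n d k B -> 0 < fsum f B) ->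
  path ltn x s -> all negative (x :: s) -> ((size s).+1 + fill_cost d x s <= k)%N ->
  (2 * (size s).+1 < k)%N.
Proof.
move=> kn pos xs /allP neg_xs fits.
have [s' [xs' last_s' sub_s' size_s']] := dstep_fill d_gt0 xs.
have /andP[/andP[x_gt0 _] _] := neg_xs x (mem_head _ _).
have /andP[/andP[_ last_n] _] : negative (last x s) := neg_xs _ (mem_last x s).
have [B BB subB] : exists2 B, dk_block n d k B & {subset x :: s' <= B}.
  apply: dk_block_extend => //=; last by rewrite size_s'; lia.
  apply: sub_all (path_ltn_bounds (sub_path (@dstep_ltn d) xs')) => a.
  by rewrite last_s'; lia.
have : ((size s).+1 <= count (fun a => (f a == -1)%R) B)%N.
  rewrite -size_filter -[(size s).+1]/(size (x :: s)).
  apply: uniq_leq_size => [|a a_xs]; first exact: (sorted_uniq ltn_trans ltnn).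
  have /andP[_ fa] := neg_xs a a_xs; rewrite mem_filter fa /=.
  by apply: subB; move: a_xs; rewrite !inE => /predU1P[->|/sub_s' ->]; rewrite ?eqxx ?orbT.
by have := pos B BB; rewrite (dk_block_fsum BB); lia.
Qed.

Lemma count_negative_le w :
  k = (2 * w + 2)%N -> (0 < w)%N -> (k <= n)%N ->
  (forall B, dk_block n d k B -> 0 < fsum f B) ->
  let M := count (fun a => f a == -1) (iota 1 n) in
  (n <= d.+1 * M)%N -> (2 * M <= w * (w + 2 - w %% 2))%N.
Proof.
move=> k_eq w_gt0 kn pos M nM.
have M_eq : M = size [seq a <- iota 1 n | f a == -1] by rewrite size_filter.
have neg_L : all negative [seq a <- iota 1 n | f a == -1].
  by apply/allP=> a; rewrite mem_filter mem_iota /negative; lia.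
have := sorted_filter ltn_trans (fun a => f a == -1) (iota_ltn_sorted 1 n).
rewrite M_eq {M_eq} in nM *; case: filter nM neg_L => [//|x s] nM neg_L xs.
have window y t : path ltn y t -> all negative (y :: t) -> size t = w ->
    (w + 2 <= fill_cost d y t)%N.
  move=> yt neg_t size_t; rewrite leqNgt; apply/negP => short.
  by have := negative_chain_short kn pos yt neg_t; rewrite size_t k_eq; lia.
have lb := fill_cost_windows window xs neg_L (leq_divM (size s) w).
have span := fill_cost_span d xs.
have /andP[/andP[x_gt0 _] _] := allP neg_L x (mem_head _ _).
have /andP[/andP[_ last_n] _] : negative (last x s) := allP neg_L _ (mem_last x s).
have : (d * (size s %/ w * (w + 2)) <= d * fill_cost d x s)%N by rewrite leq_mul2l lb orbT.
move: nM; rewrite [size _]/= => nM le_fill.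
by apply: window_count_bound w_gt0 _; rewrite -(leq_pmul2l d_gt0); nia.
Qed.

Lemma blocks_not_all_positive w :
  k = (2 * w + 2)%N -> (2 <= w)%N ->
  (d.+1 * (w * (w + 2 - w %% 2)) < 2 * n)%N ->
  (d%:Z + 1) * `|fsum f (iota 1 n)| <= (d%:Z - 1) * n%:Z ->
  ~ (forall B, dk_block n d k B -> 0 < fsum f B).
Proof.
move=> k_eq w_ge2 n_large sum_small pos.
have w_le : (w * w.+1 <= w * (w + 2 - w %% 2))%N.
  by rewrite leq_mul2l; have := ltn_pmod w (isT : (0 < 2)%N); lia.
have kn : (k <= n)%N by nia.
have range : all (fun a => 0 < a <= n)%N (iota 1 n).
  by apply/allP=> a; rewrite mem_iota; lia.
move: sum_small; rewrite (fsum_pm range) size_iota.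
set M := count _ _ => sum_small.
have nM : (n <= d.+1 * M)%N.
  have := ler_norm (n%:Z - 2 * M%:Z); nia.
have := count_negative_le k_eq (ltnW w_ge2) kn pos nM; nia.
Qed.

End SignedBlockSums.

Local Open Scope ring_scope.

Theorem theorem3p2 (k d n : nat) (f : nat -> int) :
  (6 <= k)%N -> ~~ odd k -> (2 <= d)%N ->
  let s : nat := (((k - 2) %/ 2) %% 2)%N in
  (* n >= (d+1)/8 (k^2 - 2sk + 4s - 4) + 1, cleared of denominators *)
  (d%:Z + 1) * (k%:Z ^+ 2 - 2 * s%:Z * k%:Z + 4 * s%:Z - 4) <= 8 * (n%:Z - 1) ->
  (forall x, (1 <= x <= n)%N -> f x = 1 \/ f x = -1) ->
  (* |f([n])| <= (d-1)/(d+1) n, cleared of the positive denominator d+1 *)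
  (d%:Z + 1) * `|fsum f (iota 1 n)| <= (d%:Z - 1) * n%:Z ->
  exists A : seq nat, dk_block n d k A /\ fsum f A = 0.
Proof.
move=> k_ge6 k_even d_ge2 s n_large f_pm sum_small.
apply: NNPP => no_zero_block.
have nz B : dk_block n d k B -> fsum f B != 0.
  by move=> BB; apply/eqP => zero; apply: no_zero_block; exists B.
have d_gt0 : (0 < d)%N by lia.
set w := (k./2).-1.
have k_eq : k = (2 * w + 2)%N.
  by rewrite /w -[k in LHS]odd_double_half (negbTE k_even) add0n -mul2n; lia.
have n_large_w : (d.+1 * (w * (w + 2 - w %% 2)) < 2 * n)%N.
  have s_eq : s = (w %% 2)%N by rewrite /s k_eq addnK mulKn.
  move: n_large; rewrite s_eq k_eq; have := ltn_pmod w (isT : (0 < 2)%N).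
  by case: (w %% 2)%N => [|[|]] // _; nia.
have w_ge2 : (2 <= w)%N by lia.
have [R_pos|R_neg] := boolP (0 < fsum f (iota (n.+1 - k) k)).
  apply: (blocks_not_all_positive d_gt0 f_pm k_eq w_ge2 n_large_w sum_small) => B BB.
  by rewrite (dk_block_sign_const d_gt0 f_pm k_even nz BB).
have fsumN A : fsum (fun x => - f x) A = - fsum f A by rewrite /fsum sumrN.
apply: (@blocks_not_all_positive n d k (fun x => - f x) d_gt0 _ w k_eq w_ge2 n_large_w).
- by move=> x /f_pm[]->; [right|left; rewrite opprK].
- by rewrite fsumN normrN.
- move=> B BB; rewrite fsumN oppr_gt0.
  have := dk_block_sign_const d_gt0 f_pm k_even nz BB; rewrite (negbTE R_neg).
  by have := nz B BB; lia.
Qed.
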